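(* Let $n\ge 6$ and let $CB_n$ be the set of chemical bicyclic graphs on $n$ vertices. Define the following subsets of $CB_n$ (in each, all $m_{i,j}$ not listed are $0$): $\beta_2$: $n_4=0,n_3=2,n_2=n-2,n_1=0$, $m_{2,3}=4$, $m_{3,3}=1$, $m_{2,2}=n-4$; $\beta_3$: $n_4=0,n_3=2,n_2=n-2,n_1=0$, $m_{2,3}=6$, $m_{2,2}=n-5$; $\beta_9$: $n_4=0,n_3=3,n_2=n-4,n_1=1$, $m_{1,2}=1$, $m_{2,3}=3$, $m_{3,3}=3$, $m_{2,2}=n-6$. Let $G_1\in\beta_2$, $G_2\in\beta_3$, $G_3\in\beta_9$, and let $G\in CB_n$ not belong to $\beta_2\cup\beta_3\cup\beta_9$. Then $SO(G_1)<SO(G_2)<SO(G_3)<SO(G)$.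
   Context: All graphs are simple and connected. A chemical graph is a graph with maximum degree at most $4$; a bicyclic graph is a connected graph with $n$ vertices and $n+1$ edges. $d_G(u)$ is the degree of $u$, $n_i$ the number of vertices of degree $i$, and $m_{i,j}$ the number of edges joining a vertex of degree $i$ to a vertex of degree $j$. The Sombor index is $SO(G)=\sum_{uv\in E(G)}\sqrt{d_G(u)^2+d_G(v)^2}$. *)

From mathcomp Require Import all_boot all_order all_algebra.
Set Implicit Arguments. Unset Strict Implicit. Unset Printing Implicit Defensive.
Import Order.TTheory GRing.Theory Num.Theory.

Section Graphs.
Variable n : nat.
Implicit Type e : rel 'I_n.

Definition simple_graph e : Prop := symmetric e /\ irreflexive e.

Definition connected_graph e : Prop := forall x y : 'I_n, connect e x y.

Definition deg e (x : 'I_n) : nat := #|[set y | e x y]|.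

(* edge set: unordered pairs, represented as ordered pairs (x,y) with x < y *)
Definition edges e : {set 'I_n * 'I_n} :=
  [set p : 'I_n * 'I_n | (p.1 < p.2)%N && e p.1 p.2].

Definition num_edges e : nat := #|edges e|.

Definition chemical e : Prop := forall x : 'I_n, (deg e x <= 4)%N.

Definition bicyclic e : Prop :=
  simple_graph e /\ connected_graph e /\ num_edges e = n.+1.

Definition chemical_bicyclic e : Prop := bicyclic e /\ chemical e.

Definition nv e (i : nat) : nat := #|[set x | deg e x == i]|.

Definition me e (i j : nat) : nat :=
  #|[set p in edges e |
      ((deg e p.1 == i) && (deg e p.2 == j)) ||
      ((deg e p.1 == j) && (deg e p.2 == i))]|.

Definition SO (R : rcfType) e : R :=
  \sum_(p in edges e) Num.sqrt (((deg e p.1)%:R ^+ 2 + (deg e p.2)%:R ^+ 2) : R).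

Definition beta2 e : Prop :=
  [/\ nv e 4 = 0, nv e 3 = 2, nv e 2 = n - 2, nv e 1 = 0 &
   (me e 1 1 = 0
       /\ me e 1 2 = 0
       /\ me e 1 3 = 0
       /\ me e 1 4 = 0 /\
       me e 2 2 = n - 4
       /\ me e 2 3 = 4
       /\ me e 2 4 = 0 /\
       me e 3 3 = 1
       /\ me e 3 4 = 0 /\ me e 4 4 = 0)].

Definition beta3 e : Prop :=
  [/\ nv e 4 = 0, nv e 3 = 2, nv e 2 = n - 2, nv e 1 = 0 &
   (me e 1 1 = 0
       /\ me e 1 2 = 0
       /\ me e 1 3 = 0
       /\ me e 1 4 = 0 /\
       me e 2 2 = n - 5
       /\ me e 2 3 = 6
       /\ me e 2 4 = 0 /\
       me e 3 3 = 0
       /\ me e 3 4 = 0 /\ me e 4 4 = 0)].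

Definition beta9 e : Prop :=
  [/\ nv e 4 = 0, nv e 3 = 3, nv e 2 = n - 4, nv e 1 = 1 &
   (me e 1 1 = 0
       /\ me e 1 2 = 1
       /\ me e 1 3 = 0
       /\ me e 1 4 = 0 /\
       me e 2 2 = n - 6
       /\ me e 2 3 = 3
       /\ me e 2 4 = 0 /\
       me e 3 3 = 3
       /\ me e 3 4 = 0 /\ me e 4 4 = 0)].

End Graphs.

(* Write the Sombor weight of an edge whose ends have degrees a and b as
     w(a,b) = w(2,2) + 3/2 sqrt 2 (d(a) + d(b)) + c(a,b),   d(k) = 1 - 2/k.
   Summed over the edges of a graph without isolated vertices, the middle terms give
   3/2 sqrt 2 * sum_v (deg v - 2), which is the constant 3 sqrt 2 for bicyclic graphs.
   Hence SO(G) = 2(n+1) sqrt 2 + 3 sqrt 2 + sum_{i<=j} m_ij c(i,j), where c(2,2) = c(3,3) = 0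
   and every other c(i,j) is positive.  The classes beta2, beta3, beta9 have excess
   4 c(2,3) < 6 c(2,3) < c(1,2) + 3 c(2,3) ~ 1.739.  For any other chemical bicyclic graph,
   the degree counts and the identity n3 + 2 n4 = n1 + 2 leave only a few edge patterns,
   each of excess at least 1.745. *)

From mathcomp Require Import all_boot all_order all_algebra.
From mathcomp Require Import ring lra zify.
Import Order.TTheory GRing.Theory Num.Theory.
Set Implicit Arguments. Unset Strict Implicit. Unset Printing Implicit Defensive.

Definition in_class (a b i j : nat) : bool :=
  ((a == i) && (b == j)) || ((a == j) && (b == i)).

Lemma in_classC a b i j : in_class b a i j = in_class a b i j.
Proof. by rewrite /in_class orbC (andbC (a == i)) (andbC (a == j)). Qed.

Lemma card_set_sum (T : finType) (A : {pred T}) (P : pred T) :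
  #|[set x in A | P x]| = \sum_(x in A) P x.
Proof.
rewrite -sum1_card big_mkcond [RHS]big_mkcond /=.
by apply: eq_bigr => x _; rewrite !inE; case: (x \in A); case: (P x).
Qed.

Lemma sum_nat_indicator (V : nmodType) (G : nat -> V) lo hi d :
  (lo <= d < hi)%N -> (\sum_(lo <= i < hi) G i *+ (i == d) = G d)%R.
Proof.
move=> d_in; under eq_bigr do rewrite mulrb.
by rewrite -big_mkcond big_nat1_eq d_in.
Qed.

Lemma sum_class_indicator (V : nmodType) (F : nat -> nat -> V) lo hi a b :
  (forall i j, F i j = F j i) -> (lo <= a < hi)%N -> (lo <= b < hi)%N ->
  (\sum_(lo <= i < hi) \sum_(i <= j < hi) F i j *+ in_class a b i j = F a b)%R.
Proof.
move=> F_sym; wlog le_ab : a b / (a <= b)%N => [wlog_ab a_in b_in|a_in b_in].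
  have [le_ab|/ltnW le_ba] := leqP a b; first exact: wlog_ab.
  rewrite F_sym -wlog_ab //; apply: eq_bigr => i _; apply: eq_bigr => j _.
  by rewrite in_classC.
have class_ab i j : (i <= j)%N -> in_class a b i j = (i == a) && (j == b).
  by move=> le_ij; rewrite /in_class; apply/idP/idP; lia.
transitivity (\sum_(lo <= i < hi) (\sum_(i <= j < hi) F i j *+ (j == b)) *+ (i == a))%R.
  apply: eq_bigr => i _; rewrite -sumrMnl; apply: eq_big_nat => j /andP[le_ij _].
  by rewrite class_ab // -mulrnA mulnb andbC.
rewrite (sum_nat_indicator _ a_in) sum_nat_indicator //.
by rewrite le_ab; case/andP: b_in.
Qed.

Section Graph.
Variables (n : nat) (e : rel 'I_n).

Lemma me_sum i j :
  me e i j = \sum_(p in edges e) in_class (deg e p.1) (deg e p.2) i j.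
Proof. exact: card_set_sum. Qed.

Lemma nv_sum i : nv e i = \sum_x (deg e x == i).
Proof. by rewrite -card_set_sum; apply: eq_card => x; rewrite !inE. Qed.

Lemma sum_vertices_by_degree (V : nmodType) (G : nat -> V) lo hi :
  (forall x, lo <= deg e x < hi)%N ->
  (\sum_x G (deg e x) = \sum_(lo <= i < hi) G i *+ nv e i)%R.
Proof.
move=> deg_in; under eq_bigr do rewrite -(sum_nat_indicator G (deg_in _)).
rewrite exchange_big; apply: eq_bigr => i _; rewrite nv_sum -sumrMnr.
by apply: eq_bigr => x _; rewrite eq_sym.
Qed.

Lemma sum_edges_by_class (V : nmodType) (F : nat -> nat -> V) lo hi :
  (forall x, lo <= deg e x < hi)%N -> (forall i j, F i j = F j i) ->
  (\sum_(p in edges e) F (deg e p.1) (deg e p.2)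
     = \sum_(lo <= i < hi) \sum_(i <= j < hi) F i j *+ me e i j)%R.
Proof.
move=> deg_in F_sym.
under eq_bigr do rewrite -(sum_class_indicator F_sym (deg_in _) (deg_in _)).
rewrite exchange_big; apply: eq_bigr => i _.
by rewrite exchange_big; apply: eq_bigr => j _; rewrite me_sum sumrMnr.
Qed.

Lemma me_diag_le_bin2 i : (me e i i <= 'C(nv e i, 2))%N.
Proof.
pose pair (p : 'I_n * 'I_n) := [set p.1; p.2].
set A := [set p in edges e | (deg e p.1 == i) && (deg e p.2 == i)].
have -> : me e i i = #|A| by apply: eq_card => p; rewrite !inE orbb.
have pair_inj : {in A &, injective pair}.
  move=> [p1 p2] [q1 q2]; rewrite !inE /=.
  move=> /andP[/andP[lt_p _] _] /andP[/andP[lt_q _] _] eq_pq.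
  have: p1 \in pair (q1, q2) by rewrite -eq_pq set21.
  have: p2 \in pair (q1, q2) by rewrite -eq_pq set22.
  rewrite !inE /= => /orP[]/eqP eq2 /orP[]/eqP eq1; subst p1 p2; by [|exfalso; lia].
rewrite /nv -(cards_draws [set x | deg e x == i]) -(card_in_imset pair_inj).
apply/subset_leq_card/subsetP.
move=> _ /imsetP[[p1 p2] + ->]; rewrite !inE /= => /andP[/andP[lt_p _] /andP[d1 d2]].
have neq_p : p1 != p2 by rewrite -val_eqE neq_ltn lt_p.
by rewrite subUset !sub1set !inE d1 d2 cards2 neq_p.
Qed.

Hypotheses (e_sym : symmetric e) (e_irr : irreflexive e).

Lemma sum_adj_edges (V : nmodType) (F : 'I_n -> 'I_n -> V) :
  (\sum_x \sum_(y | e x y) F x y = \sum_(p in edges e) (F p.1 p.2 + F p.2 p.1))%R.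
Proof.
rewrite pair_big_dep /= (bigID (fun p : 'I_n * 'I_n => (p.1 < p.2)%N)) /= big_split /=.
congr (_ + _)%R; first by apply: eq_bigl => p; rewrite inE andbC.
rewrite (reindex_inj (h := fun p : 'I_n * 'I_n => (p.2, p.1))) /=; last first.
  by move=> [a b] [c d] [-> ->].
apply: eq_bigl => [[a b]] /=; rewrite inE /= (e_sym b a).
by have [lt_ab|lt_ba|/val_inj ->] := ltngtP a b; rewrite ?andbT ?andbF ?e_irr.
Qed.

Lemma sum_edges_endpoints (V : nmodType) (F : 'I_n -> V) :
  (\sum_(p in edges e) (F p.1 + F p.2) = \sum_x F x *+ deg e x)%R.
Proof.
rewrite -(sum_adj_edges (fun x _ => F x)); apply: eq_bigr => x _.
by rewrite sumr_const /deg cardsE.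
Qed.

Lemma sum_deg : (\sum_x deg e x = (num_edges e).*2)%N.
Proof.
have := sum_edges_endpoints (fun _ => 1%N).
rewrite sum_nat_const (eq_bigr _ (fun x _ => natn (deg e x))) => <-.
by rewrite /num_edges; lia.
Qed.

Lemma sum_edges_deg_eq i :
  (\sum_(p in edges e) ((deg e p.1 == i) + (deg e p.2 == i)) = i * nv e i)%N.
Proof.
rewrite (sum_edges_endpoints (fun x => (deg e x == i) : nat)) nv_sum big_distrr.
apply: eq_bigr => x _.
by case: eqVneq => [->|_] /=; lia.
Qed.

End Graph.

Lemma deg_gt0 n (e : rel 'I_n) :
  (2 <= n)%N -> connected_graph e -> forall x, (0 < deg e x)%N.
Proof.
move=> n_ge2 e_conn x.
have [y] : exists y, y \in predC1 x by apply/card_gt0P; rewrite cardC1 card_ord; lia.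
rewrite !inE => neq_yx.
case/connectP: (e_conn x y) => [[_ eq_yx|z p /= /andP[e_xz _] _]].
  by rewrite eq_yx eqxx in neq_yx.
by rewrite /deg card_gt0; apply/set0Pn; exists z; rewrite inE.
Qed.

Lemma sum_classes4E (V : nmodType) (F : nat -> nat -> V) :
  (\sum_(1 <= i < 5) \sum_(i <= j < 5) F i j
     = F 1%N 1%N + F 1%N 2%N + F 1%N 3%N + F 1%N 4%N + F 2%N 2%N + F 2%N 3%N
       + F 2%N 4%N + F 3%N 3%N + F 3%N 4%N + F 4%N 4%N)%R.
Proof. by rewrite unlock /= !addr0 !addrA. Qed.

Lemma sum_degrees4E (V : nmodType) (G : nat -> V) :
  (\sum_(1 <= i < 5) G i = G 1%N + G 2%N + G 3%N + G 4%N)%R.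
Proof. by rewrite unlock /= !addr0 !addrA. Qed.

Section ChemicalBicyclic.
Variables (n : nat) (e : rel 'I_n).
Hypotheses (n_ge2 : (2 <= n)%N) (e_cb : chemical_bicyclic e).

Let e_sym : symmetric e. Proof. by case: e_cb => [[[]]]. Qed.
Let e_irr : irreflexive e. Proof. by case: e_cb => [[[]]]. Qed.

Lemma chemical_deg_in x : (1 <= deg e x < 5)%N.
Proof. by case: e_cb => [[_ [e_conn _]] e_chem]; rewrite deg_gt0 // ltnS e_chem. Qed.

Lemma chemical_edge_count :
  (me e 1 1 + me e 1 2 + me e 1 3 + me e 1 4 + me e 2 2 + me e 2 3 + me e 2 4
   + me e 3 3 + me e 3 4 + me e 4 4 = n.+1)%N.
Proof.
case: e_cb => [[_ [_ <-]] _].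
have := sum_edges_by_class (F := fun _ _ => 1%N) chemical_deg_in (fun _ _ => erefl).
rewrite sum1_card sum_classes4E /num_edges; lia.
Qed.

Lemma chemical_vertex_count : (nv e 1 + nv e 2 + nv e 3 + nv e 4 = n)%N.
Proof.
have := sum_vertices_by_degree (fun _ => 1%N) chemical_deg_in.
rewrite sum1_card card_ord sum_degrees4E; lia.
Qed.

Lemma chemical_deg_counts :
  [/\ (nv e 1 = 2 * me e 1 1 + me e 1 2 + me e 1 3 + me e 1 4)%N,
      (2 * nv e 2 = me e 1 2 + 2 * me e 2 2 + me e 2 3 + me e 2 4)%N,
      (3 * nv e 3 = me e 1 3 + me e 2 3 + 2 * me e 3 3 + me e 3 4)%N &
      (4 * nv e 4 = me e 1 4 + me e 2 4 + me e 3 4 + 2 * me e 4 4)%N].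
Proof.
have count i := sum_edges_by_class (F := fun k l => ((k == i) + (l == i))%N)
  chemical_deg_in (fun k l => addnC _ _).
rewrite -[nv e 1]mul1n -!(sum_edges_deg_eq e_sym e_irr) !count !sum_classes4E /=.
split; lia.
Qed.

(* Since sum_v (deg v - 2) = 2, we have n3 + 2 n4 = n1 + 2, and once the first two
   alternatives fail n1 = m12 <= 1; the few remaining values of (n3, n4) are settled by
   the degree counts and by m_ii <= 'C(n_i, 2). *)
Lemma chemical_bicyclic_outside_beta :
  (6 <= n)%N -> ~ beta2 e -> ~ beta3 e -> ~ beta9 e ->
  [\/ (1 <= me e 1 1 + me e 1 3 + me e 1 4)%N, (2 <= me e 1 2)%N, (4 <= me e 2 4)%N |
      (1 <= me e 1 2 /\ (4 <= me e 2 4 + me e 3 4 \/ 5 <= me e 2 3))%N].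
Proof.
move=> n_ge6 not_b2 not_b3 not_b9.
have edges := chemical_edge_count; have vertices := chemical_vertex_count.
have [c1 c2 c3 c4] := chemical_deg_counts.
have m33_le1 : (nv e 3 <= 2 -> me e 3 3 <= 1)%N.
  by move=> n3_le; apply: leq_trans (me_diag_le_bin2 e 3) (leq_bin2l 2 n3_le).
have m33_le3 : (nv e 3 <= 3 -> me e 3 3 <= 3)%N.
  by move=> n3_le; apply: leq_trans (me_diag_le_bin2 e 3) (leq_bin2l 2 n3_le).
have m44_eq0 : (nv e 4 <= 1 -> me e 4 4 = 0)%N.
  move=> n4_le; apply/eqP; rewrite -leqn0.
  exact: leq_trans (me_diag_le_bin2 e 4) (leq_bin2l 2 n4_le).
have [_|m1x_lt1] := leqP 1 (me e 1 1 + me e 1 3 + me e 1 4); first by apply: Or41.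
have [_|m12_le1] := leqP 2 (me e 1 2); first by apply: Or42.
have [n4_eq0|n4_gt0] := posnP (nv e 4); last first.
  by have [m12_eq0|m12_gt0] := posnP (me e 1 2); [apply: Or43 | apply: Or44]; lia.
have [m12_eq0|m12_gt0] := posnP (me e 1 2).
  have [m33_eq0|m33_gt0] := posnP (me e 3 3).
    by exfalso; apply: not_b3; repeat split; lia.
  by exfalso; apply: not_b2; repeat split; lia.
have [m33_lt3|m33_ge3] := ltnP (me e 3 3) 3; first by apply: Or44; lia.
by exfalso; apply: not_b9; repeat split; lia.
Qed.

End ChemicalBicyclic.

Section SomborExcess.
Variable R : rcfType.
Local Open Scope ring_scope.

Lemma sqrtr_ge (a x : R) : 0 <= a -> a ^+ 2 <= x -> a <= Num.sqrt x.
Proof.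
move=> a_ge0 le_a2x; rewrite -(ger0_norm a_ge0) -sqrtr_sqr ler_sqrt //.
exact: le_trans (sqr_ge0 a) le_a2x.
Qed.

Lemma sqrtr_le (b x : R) : 0 <= b -> x <= b ^+ 2 -> Num.sqrt x <= b.
Proof.
by move=> b_ge0 le_xb2; rewrite -(ger0_norm b_ge0) -sqrtr_sqr ler_sqrt // sqr_ge0.
Qed.

Definition sombor_weight (i j : nat) : R := Num.sqrt (i%:R ^+ 2 + j%:R ^+ 2).

Lemma sombor_weightC i j : sombor_weight i j = sombor_weight j i.
Proof. by rewrite /sombor_weight addrC. Qed.

Lemma sombor_weight_diag i : sombor_weight i i = i%:R * Num.sqrt 2.
Proof.
rewrite /sombor_weight -mulr2n -(mulr_natr (i%:R ^+ 2)) sqrtrM ?sqr_ge0 //.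
by rewrite sqrtr_sqr ger0_norm.
Qed.

Definition degree_defect (i : nat) : R := 1 - 2 / i%:R.

(* The factor 3/2 sqrt 2 is the one for which both 2-2 and 3-3 edges have excess 0. *)
Definition sombor_excess (i j : nat) : R :=
  sombor_weight i j - sombor_weight 2 2
  - 3 / 2 * Num.sqrt 2 * (degree_defect i + degree_defect j).

Lemma sombor_excessC i j : sombor_excess i j = sombor_excess j i.
Proof. by rewrite /sombor_excess sombor_weightC (addrC (degree_defect i)). Qed.

Lemma sombor_excess22 : sombor_excess 2 2 = 0.
Proof. rewrite /sombor_excess /degree_defect; lra. Qed.

Lemma sombor_excess33 : sombor_excess 3 3 = 0.
Proof. rewrite /sombor_excess /degree_defect !sombor_weight_diag; lra. Qed.

Lemma SO_decomposition n (e : rel 'I_n) :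
  symmetric e -> irreflexive e -> (forall x, 0 < deg e x)%N ->
  SO R e = (num_edges e)%:R * sombor_weight 2 2
           + 3 * Num.sqrt 2 * ((num_edges e)%:R - n%:R)
           + \sum_(p in edges e) sombor_excess (deg e p.1) (deg e p.2).
Proof.
move=> e_sym e_irr deg_gt0.
have defect_sum : \sum_(p in edges e) (degree_defect (deg e p.1) + degree_defect (deg e p.2))
                  = 2 * ((num_edges e)%:R - n%:R).
  rewrite (sum_edges_endpoints e_sym e_irr (fun x => degree_defect (deg e x))).
  transitivity (\sum_x ((deg e x)%:R - 2 : R)).
    apply: eq_bigr => x _.
    have deg_neq0 : (deg e x)%:R != 0 :> R by rewrite pnatr_eq0 -lt0n.
    by rewrite -[degree_defect _ *+ _]mulr_natr mulrBl mul1r divfK.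
  rewrite sumrB -natr_sum sum_deg // sumr_const card_ord -mulr_natr -muln2 natrM; ring.
have weight_split p : sombor_weight (deg e p.1) (deg e p.2) = sombor_weight 2 2
    + 3 / 2 * Num.sqrt 2 * (degree_defect (deg e p.1) + degree_defect (deg e p.2))
    + sombor_excess (deg e p.1) (deg e p.2).
  by rewrite /sombor_excess; ring.
have -> : SO R e = \sum_(p in edges e) sombor_weight (deg e p.1) (deg e p.2) by [].
under eq_bigr do rewrite weight_split.
rewrite big_split; congr (_ + _).
rewrite big_split /= -mulr_sumr defect_sum sumr_const -[_ *+ #|_|]mulr_natl /num_edges.
by field.
Qed.

Definition sombor_excess_sum n (e : rel 'I_n) : R :=
  \sum_(1 <= i < 5) \sum_(i <= j < 5) sombor_excess i j *+ me e i j.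

Lemma SO_chemical_bicyclic n (e : rel 'I_n) : (2 <= n)%N -> chemical_bicyclic e ->
  SO R e = n.+1%:R * sombor_weight 2 2 + 3 * Num.sqrt 2 + sombor_excess_sum e.
Proof.
move=> n_ge2 e_cb; have [[[e_sym e_irr] [_ edges_n]] _] := e_cb.
have deg_in := chemical_deg_in n_ge2 e_cb.
rewrite SO_decomposition // => [|x]; last by case/andP: (deg_in x).
by rewrite /sombor_excess_sum edges_n (sum_edges_by_class deg_in sombor_excessC) -natr1; ring.
Qed.

Lemma sombor_excess_sumE n (e : rel 'I_n) : sombor_excess_sum e =
  sombor_excess 1 1 *+ me e 1 1 + sombor_excess 1 2 *+ me e 1 2
  + sombor_excess 1 3 *+ me e 1 3 + sombor_excess 1 4 *+ me e 1 4
  + sombor_excess 2 3 *+ me e 2 3 + sombor_excess 2 4 *+ me e 2 4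
  + sombor_excess 3 4 *+ me e 3 4 + sombor_excess 4 4 *+ me e 4 4.
Proof.
by rewrite /sombor_excess_sum sum_classes4E sombor_excess22 sombor_excess33 !mul0rn !addr0.
Qed.

Lemma sombor_excess_sum_beta2 n (e : rel 'I_n) :
  beta2 e -> sombor_excess_sum e = sombor_excess 2 3 *+ 4.
Proof.
rewrite sombor_excess_sumE => -[_ _ _ _ [-> [-> [-> [-> [_ [-> [-> [_ [-> ->]]]]]]]]]].
by rewrite !mulr0n !add0r !addr0.
Qed.

Lemma sombor_excess_sum_beta3 n (e : rel 'I_n) :
  beta3 e -> sombor_excess_sum e = sombor_excess 2 3 *+ 6.
Proof.
rewrite sombor_excess_sumE => -[_ _ _ _ [-> [-> [-> [-> [_ [-> [-> [_ [-> ->]]]]]]]]]].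
by rewrite !mulr0n !add0r !addr0.
Qed.

Lemma sombor_excess_sum_beta9 n (e : rel 'I_n) :
  beta9 e -> sombor_excess_sum e = sombor_excess 1 2 + sombor_excess 2 3 *+ 3.
Proof.
rewrite sombor_excess_sumE => -[_ _ _ _ [-> [-> [-> [-> [_ [-> [-> [_ [-> ->]]]]]]]]]].
by rewrite !mulr0n mulr1n !add0r !addr0.
Qed.

Lemma sqrt2_bounds : 707/500 <= Num.sqrt 2 :> R /\ Num.sqrt 2 <= 283/200 :> R.
Proof. by split; [apply: sqrtr_ge | apply: sqrtr_le]; lra. Qed.

(* 349/200 separates c(1,2) + 3 c(2,3) ~ 1.7391 from the smallest competing excess
   c(1,3) = sqrt 10 - sqrt 2 ~ 1.7481. *)
Lemma sombor_excess_lower_bounds :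
  [/\ 349/200 <= sombor_excess 1 1, 349/200 <= sombor_excess 1 3
    & 349/200 <= sombor_excess 1 4] /\
  [/\ 3/2 <= sombor_excess 1 2, 1/20 <= sombor_excess 2 3, 1/2 <= sombor_excess 2 4,
      1/4 <= sombor_excess 3 4 & 0 <= sombor_excess 4 4].
Proof.
have [s2_lb s2_ub] := sqrt2_bounds.
have w12 : 559/250 <= sombor_weight 1 2 by apply: sqrtr_ge; lra.
have w13 : 1581/500 <= sombor_weight 1 3 by apply: sqrtr_ge; lra.
have w14 : 4 <= sombor_weight 1 4 by apply: sqrtr_ge; lra.
have w23 : 18/5 <= sombor_weight 2 3 by apply: sqrtr_ge; lra.
have w24 : 22/5 <= sombor_weight 2 4 by apply: sqrtr_ge; lra.
have w34 : 5 <= sombor_weight 3 4 by apply: sqrtr_ge; lra.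
rewrite /sombor_excess /degree_defect !sombor_weight_diag.
by split; split; lra.
Qed.

Lemma sombor_excess_beta9_lt : sombor_excess 1 2 + sombor_excess 2 3 *+ 3 < 349/200.
Proof.
have [s2_lb _] := sqrt2_bounds.
have w12 : sombor_weight 1 2 <= 2237/1000 by apply: sqrtr_le; lra.
have w23 : sombor_weight 2 3 <= 1803/500 by apply: sqrtr_le; lra.
rewrite /sombor_excess /degree_defect !sombor_weight_diag; lra.
Qed.

Lemma sombor_excess_sum_ge n (e : rel 'I_n) :
  [\/ (1 <= me e 1 1 + me e 1 3 + me e 1 4)%N, (2 <= me e 1 2)%N, (4 <= me e 2 4)%N |
      (1 <= me e 1 2 /\ (4 <= me e 2 4 + me e 3 4 \/ 5 <= me e 2 3))%N] ->
  349/200 <= sombor_excess_sum e.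
Proof.
move=> cases; rewrite sombor_excess_sumE.
have [[b11 b13 b14] [b12 b23 b24 b34 b44]] := sombor_excess_lower_bounds.
have scale (k c : R) m : k <= c -> 0 <= m%:R :> R /\ k * m%:R <= c *+ m.
  by move=> le_kc; rewrite ler0n mulr_natr lerMn2r le_kc orbT.
move: (scale _ _ (me e 1 1) b11) (scale _ _ (me e 1 3) b13) (scale _ _ (me e 1 4) b14)
  (scale _ _ (me e 1 2) b12) (scale _ _ (me e 2 3) b23) (scale _ _ (me e 2 4) b24)
  (scale _ _ (me e 3 4) b34) (scale _ _ (me e 4 4) b44).
move=> [? ?] [? ?] [? ?] [? ?] [? ?] [? ?] [? ?] [? ?].
by case: cases => [|||[+ []]]; rewrite -!(ler_nat R) ?natrD => *; lra.
Qed.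

End SomborExcess.

Local Open Scope ring_scope.

Theorem theorem3p9 (R : rcfType) (n : nat) (e1 e2 e3 e : rel 'I_n) :
  (6 <= n)%N ->
  chemical_bicyclic e1 -> beta2 e1 ->
  chemical_bicyclic e2 -> beta3 e2 ->
  chemical_bicyclic e3 -> beta9 e3 ->
  chemical_bicyclic e -> ~ beta2 e -> ~ beta3 e -> ~ beta9 e ->
  SO R e1 < SO R e2 /\ SO R e2 < SO R e3 /\ SO R e3 < SO R e.
Proof.
move=> n_ge6 cb1 e1_b2 cb2 e2_b3 cb3 e3_b9 cb not_b2 not_b3 not_b9.
have n_ge2 : (2 <= n)%N by apply: leq_trans n_ge6.
rewrite !SO_chemical_bicyclic // (sombor_excess_sum_beta2 _ e1_b2).
rewrite (sombor_excess_sum_beta3 _ e2_b3) (sombor_excess_sum_beta9 _ e3_b9).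
have e_ge := sombor_excess_sum_ge R
  (chemical_bicyclic_outside_beta n_ge2 cb n_ge6 not_b2 not_b3 not_b9).
have [_ [c12_ge c23_ge _ _ _]] := sombor_excess_lower_bounds R.
have beta9_lt := sombor_excess_beta9_lt R.
by split; [|split]; lra.
Qed.
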